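(* Let $s\ge1$, $n=2s$, let $A$ be the $n\times n$ matrix with $A_{ij}=1$ if $|i-j|\le s-1$ and $0$ otherwise, let $J$ be the $n\times n$ all-ones matrix and $B=J-A$. Label the eigenvalues of $A$ as $|\lambda_1(A)|\ge|\lambda_2(A)|\ge\dots\ge|\lambda_n(A)|$ and those of $B$ as $\gamma_1,\dots,\gamma_n$ with $|\gamma_1|\ge|\gamma_2|\ge\dots\ge|\gamma_n|$. Then $|\lambda_2(A)|=|\gamma_2|$. Moreover, $\lambda_2(A)$ and $\gamma_2$ have the same eigenvector, i.e. there is a nonzero vector which is an eigenvector of $A$ for $\lambda_2(A)$ and an eigenvector of $B$ for $\gamma_2$. *)

From HB Require Import structures.
From mathcomp Require Import all_boot all_order all_algebra.
Set Implicit Arguments. Unset Strict Implicit. Unset Printing Implicit Defensive.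
Import Order.TTheory GRing.Theory Num.Theory.
Local Open Scope ring_scope.

(* The n x n band matrix A_{ij} = 1 iff |i - j| <= s - 1 (indices 0-based,
   which does not affect |i - j|). *)
Definition bandA (R : ringType) (s : nat) : 'M[R]_(s.*2) :=
  \matrix_(i, j) (if (maxn i j - minn i j <= s.-1)%N then 1 else 0).

Definition bandB (R : ringType) (s : nat) : 'M[R]_(s.*2) :=
  const_mx 1 - bandA R s.

(* l is a labelling of the eigenvalues (with algebraic multiplicity) of M,
   ordered so that |l_1| >= |l_2| >= ... >= |l_n|. *)
Definition abs_ordered_eigenvalues (R : realFieldType) (n : nat)
    (M : 'M[R]_n) (l : seq R) : Prop :=
  [/\ size l = n,
      char_poly M = \prod_(x <- l) ('X - x%:P)
    & sorted (fun x y => `|y| <= `|x|) l].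

(* Conjugating by T = [[1, 1], [E, -E]], with E the exchange matrix, turns A into
   diag(2J - H, H) and B = J - A into diag(H, -H), where H_ij = [i + j < s] is
   symmetric. Hence spec B = spec H u -spec H, and an eigenvector x of H for h gives
   the common eigenvector T (0, x), with eigenvalue h for A and -h for B. It remains
   to see that lambda_2(A) is an eigenvalue of H of maximal modulus. For the two
   symmetric blocks, the Rayleigh quotient at the all-ones vector and the sum of the
   squared eigenvalues (the sum of the squared entries) show that 2J - H has an
   eigenvalue k0 >= (3s - 1)/2 while its other eigenvalues k satisfy 4k^2 <= s^2 - 1,
   and that the spectral radius r of H satisfies s + 1 <= 2r and 2r^2 <= s(s + 1).
   For s >= 2 this gives k0 > r > |k|. *)

From HB Require Import structures.
From mathcomp Require Import all_boot all_order all_algebra.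
From mathcomp Require Import complex zify ring lra.
Set Implicit Arguments. Unset Strict Implicit. Unset Printing Implicit Defensive.
Import Order.TTheory GRing.Theory Num.Theory.
Local Open Scope ring_scope.
Local Open Scope sesquilinear_scope.

Lemma char_poly_intertwine (F : fieldType) n (P M D : 'M[F]_n) :
  P \in unitmx -> M *m P = P *m D -> char_poly M = char_poly D.
Proof.
move=> Pu MPD; have -> : D = invmx P *m M *m P by rewrite -mulmxA MPD mulKmx.
have PC_inv : map_mx polyC (invmx P) *m map_mx polyC P = 1%:M.
  by rewrite -map_mxM mulVmx // map_mx1.
rewrite /char_poly /char_poly_mx.
have -> : 'X%:M - map_mx polyC (invmx P *m M *m P) =
    map_mx polyC (invmx P) *m ('X%:M - map_mx polyC M) *m map_mx polyC P.
  by rewrite mulmxBr mulmxBl !map_mxM mul_mx_scalar -scalemxAl PC_inv scalemx1.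
by rewrite !det_mulmx mulrAC -det_mulmx PC_inv det1 mul1r.
Qed.

Lemma size_char_poly_roots (R : nzRingType) n (M : 'M[R]_n) (l : seq R) :
  char_poly M = \prod_(x <- l) ('X - x%:P) -> size l = n.
Proof.
by move=> charM; have := size_char_poly M; rewrite charM size_prod_XsubC => -[].
Qed.

Lemma char_poly_opp (F : fieldType) n (M : 'M[F]_n) (l : seq F) :
  char_poly M = \prod_(x <- l) ('X - x%:P) ->
  char_poly (- M) = \prod_(x <- map -%R l) ('X - x%:P).
Proof.
move=> charM; have size_l := size_char_poly_roots charM; rewrite /char_poly.
have -> : char_poly_mx (- M) = - map_mx (comp_poly (- 'X)) (char_poly_mx M).
  apply/matrixP => i j; rewrite !mxE comp_polyB comp_polyC polyCN.
  by case: (i == j); rewrite ?mulr1n ?mulr0n ?comp_polyX ?comp_poly0; ring.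
rewrite -scaleN1r detZ det_map_mx -/(char_poly M) charM rmorph_prod /=.
rewrite big_map -size_l; elim: l {charM size_l} => [|x l IHl].
  by rewrite !big_nil mulr1.
rewrite !big_cons /= exprS comp_polyB comp_polyX comp_polyC polyCN -IHl; ring.
Qed.

Lemma split_mul_monic (F : fieldType) (p q : {poly F}) (l : seq F) :
  p \is monic -> q \is monic -> p * q = \prod_(x <- l) ('X - x%:P) ->
  exists lp lq, [/\ p = \prod_(x <- lp) ('X - x%:P),
    q = \prod_(x <- lq) ('X - x%:P) & perm_eq l (lp ++ lq)].
Proof.
move=> p_monic q_monic pq_split.
have /dvdp_prod_XsubC[mp] : p %| \prod_(x <- l) ('X - x%:P).
  by rewrite -pq_split dvdp_mulIl.
have /dvdp_prod_XsubC[mq] : q %| \prod_(x <- l) ('X - x%:P).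
  by rewrite -pq_split dvdp_mulIr.
rewrite !eqp_monic ?monic_prod_XsubC // => /eqP q_split /eqP p_split.
exists (mask mp l), (mask mq l); split => //.
by apply: prod_XsubC_eq; rewrite big_cat -p_split -q_split.
Qed.

Lemma exists_max_seq (T : eqType) (R : realDomainType) (f : T -> R) (l : seq T) :
  l != [::] -> exists2 y, y \in l & forall x, x \in l -> f x <= f y.
Proof.
elim: l => [//|a l IHl] _; case: (eqVneq l [::]) => [->|/IHl[y y_in y_max]].
  by exists a => [|x]; rewrite ?mem_head // inE => /eqP ->.
have [ay|ya] := leP (f a) (f y).
  by exists y => [|x]; rewrite inE ?y_in ?orbT // => /orP[/eqP -> | /y_max].
exists a => [|x]; rewrite ?mem_head // inE => /orP[/eqP -> // | /y_max xy].
exact: le_trans xy (ltW ya).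
Qed.

Section RealSeq.
Variable R : realDomainType.
Implicit Types (l t : seq R) (x y mu : R).

Lemma ge_abs_trans : transitive (fun x y : R => `|y| <= `|x|).
Proof. by move=> y x z xy yz; apply: le_trans yz xy. Qed.

Lemma abs_sorted_nth1 l t x mu :
  sorted (fun a b => `|b| <= `|a|) l -> perm_eq l (x :: t) -> mu < `|x| ->
  (forall y, y \in t -> `|y| <= mu) -> (exists2 y, y \in t & `|y| = mu) ->
  l`_1 \in t /\ `|l`_1| = mu.
Proof.
move=> l_sorted l_perm mu_lt t_le [y y_in y_mu].
have := perm_size l_perm.
case: l l_sorted l_perm => [|a [|b l]] //; first by case: (t) y_in.
move=> /[dup] /(order_path_min ge_abs_trans) a_max.
move=> /path_sorted /(order_path_min ge_abs_trans) b_max l_perm _.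
have x_le_a : `|x| <= `|a|.
  have : x \in [:: a, b & l] by rewrite (perm_mem l_perm) mem_head.
  by rewrite inE => /predU1P[-> // | /(allP a_max)].
have a_x : a = x.
  apply: contraTeq (lt_le_trans mu_lt x_le_a) => a_neq_x.
  have : a \in x :: t by rewrite -(perm_mem l_perm) mem_head.
  by rewrite inE (negPf a_neq_x) /= -leNgt => /t_le.
move: l_perm; rewrite a_x perm_cons => l_perm.
have b_in : b \in t by rewrite -(perm_mem l_perm) mem_head.
split=> //; apply/eqP; rewrite eq_le t_le //= -y_mu.
have : y \in b :: l by rewrite (perm_mem l_perm).
by rewrite inE => /predU1P[-> // | /(allP b_max)].
Qed.

Lemma abs_sorted_opp_pair l x : x \in l -> (forall y, y \in l -> `|y| <= `|x|) ->
  exists g, [/\ perm_eq g (l ++ map -%R l),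
                sorted (fun a b => `|b| <= `|a|) g & g`_1 = - x].
Proof.
move=> x_in x_max; set t := rem x l.
have l_perm : perm_eq l (x :: t) := perm_to_rem x_in.
exists [:: x, - x & sort (fun a b => `|b| <= `|a|) (t ++ map -%R t)]; split => //.
- rewrite perm_sym (perm_trans (perm_cat l_perm (perm_map -%R l_perm))) //=.
  by rewrite perm_cons -cat1s perm_catCA /= perm_cons perm_sym perm_sort.
- have ge_abs_total : total (fun a b : R => `|b| <= `|a|) by move=> a b; apply: le_total.
  rewrite /= normrN lexx /= (path_sortedE ge_abs_trans) sort_sorted // andbT.
  apply/allP => y; rewrite normrN mem_sort mem_cat.
  by case/orP => [/mem_rem/x_max // | /mapP[z /mem_rem/x_max z_le ->]]; rewrite normrN.
Qed.

Lemma sqr_le_sum_sqr l x : x \in l -> x ^+ 2 <= \sum_(y <- l) y ^+ 2.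
Proof.
move=> /perm_to_rem l_perm; rewrite (perm_big _ l_perm) big_cons lerDl.
by apply: sumr_ge0 => y _; apply: sqr_ge0.
Qed.

Lemma sqrD_le_sum_sqr l x y : x \in l -> y \in rem x l ->
  x ^+ 2 + y ^+ 2 <= \sum_(z <- l) z ^+ 2.
Proof.
by move=> /perm_to_rem l_perm y_in; rewrite (perm_big _ l_perm) big_cons lerD2l sqr_le_sum_sqr.
Qed.
End RealSeq.

Section EntrySums.
Variables (R : comNzRingType) (n : nat) (a : R) (M : 'M[R]_n).

Lemma sum_const_sub_mx :
  \sum_i \sum_j (const_mx a - M) i j = a * n%:R ^+ 2 - \sum_i \sum_j M i j.
Proof.
under eq_bigr do under eq_bigr do rewrite !mxE.
under eq_bigr do rewrite sumrB sumr_const card_ord.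
by rewrite sumrB sumr_const card_ord -mulrnA -natrX mulr_natr.
Qed.

Lemma sum_sqr_const_sub_mx : \sum_i \sum_j (const_mx a - M) i j ^+ 2 =
  a ^+ 2 * n%:R ^+ 2 - 2 * a * \sum_i \sum_j M i j + \sum_i \sum_j M i j ^+ 2.
Proof.
have entry i j : (const_mx a - M) i j ^+ 2 = a ^+ 2 - 2 * a * M i j + M i j ^+ 2.
  by rewrite !mxE; ring.
under eq_bigr do under eq_bigr do rewrite entry.
under eq_bigr do rewrite big_split sumrB sumr_const card_ord -mulr_sumr /=.
by rewrite big_split sumrB sumr_const card_ord -mulr_sumr /= -mulrnA -natrX mulr_natr.
Qed.
End EntrySums.

Section RealSymmetric.
Variables (R : rcfType) (n : nat) (M : 'M[R]_n) (rs : seq R).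
Hypotheses (M_sym : M^T = M) (charM : char_poly M = \prod_(r <- rs) ('X - r%:P)).
Local Notation toC := (real_complex R).

Lemma realsym_orthodiag : exists2 P : 'M[R[i]]_n, P \is unitarymx &
  exists2 d : 'rV_n, map_mx toC M = P^t* *m diag_mx d *m P &
    perm_eq [seq d 0 i | i <- enum 'I_n] (map toC rs).
Proof.
pose Mc := map_mx toC M.
have Mc_normal : Mc \is normalmx.
  apply/normalmxP; suff -> : Mc^t* = Mc by [].
  by rewrite map_trmx M_sym; apply/matrixP => i j; rewrite !mxE conj_Creal ?complex_real.
have /orthomx_spectralP Mc_diag := Mc_normal.
set P := spectralmx Mc in Mc_diag; set d := spectral_diag Mc in Mc_diag.
have P_unitary : P \is unitarymx := spectral_unitarymx Mc.
exists P => //; exists d; first by rewrite -invmx_unitary.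
apply: prod_XsubC_eq; rewrite !big_map -enumT big_enum /=.
have <- : char_poly (diag_mx d) = \prod_(i in 'I_n) ('X - (d 0 i)%:P).
  rewrite char_poly_trig ?diag_mx_is_trig //.
  by apply: eq_bigr => i _; rewrite mxE eqxx.
rewrite -(@char_poly_intertwine _ _ (invmx P) Mc); last first.
- by rewrite Mc_diag mulmxK ?spectral_unit.
- by rewrite unitmx_inv spectral_unit.
rewrite -map_char_poly charM rmorph_prod.
by apply: eq_bigr => r _; rewrite /= map_polyXsubC.
Qed.

Lemma realsym_rayleigh (x : 'rV[R]_n) r0 : (forall r, r \in rs -> r <= r0) ->
  (x *m M *m x^T) 0 0 <= r0 * (x *m x^T) 0 0.
Proof.
move=> r0_max; have [P P_unitary [d Mc_diag d_rs]] := realsym_orthodiag.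
have d_real k : exists2 r, r \in rs & d 0 k = toC r.
  by apply/mapP; rewrite -(perm_mem d_rs) map_f ?mem_enum.
pose xc := map_mx toC x; pose w := P *m xc^T.
have xc_real : map_mx Num.conj xc = xc.
  by apply/matrixP => i j; rewrite !mxE conj_Creal ?complex_real.
have wC : w^t* = xc *m P^t* by rewrite trmx_mul trmxK map_mxM xc_real.
have xMx : toC ((x *m M *m x^T) 0 0) = (w^t* *m diag_mx d *m w) 0 0.
  by rewrite wC /w !mulmxA -!(mulmxA xc) -Mc_diag mulmxA /xc map_trmx -!map_mxM [RHS]mxE.
have xx : toC ((x *m x^T) 0 0) = (w^t* *m w) 0 0.
  by rewrite wC /w mulmxA mulmxKtV // /xc map_trmx -map_mxM [RHS]mxE.
rewrite -lecR rmorphM /= xMx xx mul_mx_diag !mxE mulr_sumr -subr_ge0 -sumrB.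
apply: sumr_ge0 => k _; rewrite !mxE; have [r r_in ->] := d_real k.
move: (\sum_j _) => z; rewrite (mulrC z^* (toC r)) -mulrA -mulrBl.
apply: mulr_ge0; last by rewrite mulrC mul_conjC_ge0.
by rewrite -rmorphB ler0c subr_ge0 r0_max.
Qed.

Lemma realsym_sum_sqr_eigen : \sum_(r <- rs) r ^+ 2 = \sum_i \sum_j M i j ^+ 2.
Proof.
have [P P_unitary [d Mc_diag d_rs]] := realsym_orthodiag.
apply: (@complexI R); rewrite !rmorph_sum /=.
have -> : \sum_(r <- rs) toC (r ^+ 2) = \sum_i d 0 i ^+ 2.
  under eq_bigr do rewrite rmorphXn.
  by rewrite -(big_map toC xpredT (fun c => c ^+ 2)) -(perm_big _ d_rs) big_map big_enum.
have PP : P *m P^t* = 1%:M by apply/unitarymxP.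
have -> : \sum_i d 0 i ^+ 2 = \tr (map_mx toC M *m map_mx toC M).
  rewrite Mc_diag !mulmxA -(mulmxA _ P) PP mulmx1 mxtrace_mulC !mulmxA PP mul1mx.
  by rewrite mul_mx_diag; apply: eq_bigr => i _; rewrite !mxE eqxx mulr1n.
apply: eq_bigr => i _; rewrite -map_mxM mxE; congr toC; rewrite mxE; apply: eq_bigr => j _.
by rewrite -{2}M_sym mxE.
Qed.

Lemma realsym_eigen_ge_mean : (0 < n)%N ->
  exists2 r, r \in rs & \sum_i \sum_j M i j <= n%:R * r.
Proof.
move=> n_gt0; have rs_neq0 : rs != [::].
  by rewrite -size_eq0 (size_char_poly_roots charM) -lt0n.
have [r r_in r_max] := exists_max_seq id rs_neq0.
pose u : 'rV[R]_n := const_mx 1.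
have uMu : (u *m M *m u^T) 0 0 = \sum_i \sum_j M i j.
  rewrite mxE exchange_big; apply: eq_bigr => j _; rewrite !mxE mulr1.
  by apply: eq_bigr => i _; rewrite mxE mul1r.
have uu : (u *m u^T) 0 0 = n%:R.
  by rewrite mxE (eq_bigr (fun=> 1)) ?sumr_const ?card_ord // => i _; rewrite !mxE mulr1.
by exists r => //; rewrite -uMu mulrC -uu realsym_rayleigh.
Qed.

End RealSymmetric.

Lemma sum_antitri_nat s :
  (2 * \sum_(i < s) \sum_(j < s) (i + j < s) = s * s.+1)%N.
Proof.
have row_sum (i : 'I_s) : (\sum_(j < s) (i + j < s) = s - i)%N.
  rewrite -[RHS]card_ord -sum1_card (big_ord_widen s (fun _ => 1%N) (leq_subr i s)).
  by rewrite [RHS]big_mkcond; apply: eq_bigr => j _; rewrite ltn_subRL.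
rewrite (eq_bigr _ (fun i _ => row_sum i)) {row_sum}.
elim: s => [|s IHs]; first by rewrite big_ord0.
by rewrite big_ord_recl subn0 (eq_bigr (fun i : 'I_s => s - i)%N) //; lia.
Qed.

Section BandBlocks.
Variables (R : comNzRingType) (s : nat).
Local Notation J := (const_mx 1 : 'M[R]_s).

Definition antitri_mx : 'M[R]_s := \matrix_(i, j) ((i + j < s)%N)%:R.
Definition lowtri_mx : 'M[R]_s := \matrix_(i, j) ((j < i)%N)%:R.
Definition exchange_mx : 'M[R]_s := rowsub (@rev_ord s) 1%:M.
Local Notation H := antitri_mx.
Local Notation L := lowtri_mx.
Local Notation E := exchange_mx.
Local Notation S := (s%:R : R).

Definition band_block : 'M[R]_(s + s) := block_mx J L L^T J.
Definition band_basis : 'M[R]_(s + s) := block_mx 1%:M 1%:M E (- E).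

Lemma band_blockE :
  \matrix_(i, j) (if (maxn i j - minn i j <= s.-1)%N then 1 else 0) = band_block.
Proof.
apply/matrixP => i j; rewrite -(splitK i) -(splitK j) mxE.
case: (split i) => i'; case: (split j) => j';
  rewrite ?(block_mxEul, block_mxEur, block_mxEdl, block_mxEdr) !mxE /=;
  have := ltn_ord i'; have := ltn_ord j'; move=> *.
all: case: ifP => ?; try case: ltnP => ?; rewrite /= ?mulr1n //; lia.
Qed.

Lemma mul_exchange_mx m (A : 'M[R]_(s, m)) : E *m A = rowsub (@rev_ord s) A.
Proof. by rewrite mul_rowsub_mx mul1mx. Qed.

Lemma mul_mx_exchange m (A : 'M[R]_(m, s)) : A *m E = colsub (@rev_ord s) A.
Proof.
have -> : E = colsub (@rev_ord s) 1%:M.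
  by apply/matrixP => i j; rewrite !mxE (canF_eq (@rev_ordK s)).

by rewrite mulmx_colsub mulmx1.
Qed.

Lemma exchange_mxK : E *m E = 1%:M.
Proof. by apply/matrixP => i j; rewrite mul_exchange_mx !mxE rev_ordK. Qed.

Lemma exchange_const m (a : R) : E *m const_mx a = const_mx a :> 'M_(s, m).
Proof. by rewrite mul_exchange_mx mxsub_const. Qed.

Lemma const_exchange m (a : R) : const_mx a *m E = const_mx a :> 'M_(m, s).
Proof. by rewrite mul_mx_exchange mxsub_const. Qed.

Lemma lowtri_exchange : L *m E = J - H.
Proof.
apply/matrixP => i j; rewrite mul_mx_exchange !mxE /=.
have := ltn_ord i; have := ltn_ord j.
by case: (ltnP (s - j.+1) i); case: (ltnP (i + j) s) => /= *; rewrite ?subrr ?subr0 //; lia.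
Qed.

Lemma exchange_antitri : E *m H = J - L^T.
Proof.
apply/matrixP => i j; rewrite mul_exchange_mx !mxE /=.
have := ltn_ord i; have := ltn_ord j.
by case: (ltnP (s - i.+1 + j) s); case: (ltnP i j) => /= *; rewrite ?subrr ?subr0 //; lia.
Qed.

Lemma band_block_basis :
  band_block *m band_basis = band_basis *m block_mx (const_mx 2 - H) 0 0 H.
Proof.
rewrite /band_block /band_basis !mulmx_block !(mulmx1, mulmx0, mul1mx, mulmxN, mulNmx).
rewrite !(addr0, add0r) lowtri_exchange const_exchange mulmxBr exchange_const.
rewrite exchange_antitri; congr block_mx; apply/matrixP => i j; rewrite !mxE; ring.
Qed.

Lemma coband_block_basis :
  (const_mx 1 - band_block) *m band_basis = band_basis *m block_mx H 0 0 (- H).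
Proof.
rewrite /band_block -block_mx_const opp_block_mx add_block_mx /band_basis.
rewrite !mulmx_block !(mulmx1, mulmx0, mul1mx, mulmxN, mulNmx, addr0, add0r, mulmxBl).
rewrite lowtri_exchange const_exchange exchange_antitri.
congr block_mx; apply/matrixP => i j; rewrite !mxE; ring.
Qed.

Lemma antitri_sum : 2 * \sum_i \sum_j H i j = S * (S + 1).
Proof.
rewrite natr1 -natrM -sum_antitri_nat natrM natr_sum.
congr (_ * _); apply: eq_bigr => i _; rewrite natr_sum.
by apply: eq_bigr => j _; rewrite mxE.
Qed.

Lemma antitri_sum_sqr : \sum_i \sum_j H i j ^+ 2 = \sum_i \sum_j H i j.
Proof.
apply: eq_bigr => i _; apply: eq_bigr => j _.
by rewrite mxE; case: (i + j < s)%N; rewrite ?expr1n ?expr0n.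
Qed.

Lemma antitri_sym : H^T = H.
Proof. by apply/matrixP => i j; rewrite !mxE addnC. Qed.

End BandBlocks.

Section BandSpectrum.
Variables (R : numFieldType) (s : nat).
Local Notation H := (antitri_mx R s).
Local Notation A := (band_block R s).
Local Notation T := (band_basis R s).

Lemma band_basis_unit : T \in unitmx.
Proof.
pose E := exchange_mx R s.
have T2 : block_mx 1%:M E 1%:M (- E) *m T = 2%:M.
  rewrite mulmx_block !(mulmx1, mulmxN, mulNmx, opprK) exchange_mxK subrr.
  by rewrite [RHS]scalar_mx_block -raddfD.
have : (2^-1 *: block_mx 1%:M E 1%:M (- E)) *m T = 1%:M.
  by rewrite -scalemxAl T2 scale_scalar_mx mulVf // pnatr_eq0.
by case/mulmx1_unit.
Qed.

Lemma char_band_block :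
  char_poly A = char_poly (const_mx 2 - H) * char_poly H.
Proof.
rewrite (char_poly_intertwine band_basis_unit (band_block_basis R s)).
by rewrite /char_poly char_block_diag_mx det_ublock.
Qed.

Lemma char_coband_block :
  char_poly (const_mx 1 - A) = char_poly H * char_poly (- H).
Proof.
rewrite (char_poly_intertwine band_basis_unit (coband_block_basis R s)).
by rewrite /char_poly char_block_diag_mx det_ublock.
Qed.

Lemma band_block_eigenvector (x : 'cV[R]_s) l : x != 0 -> H *m x = l *: x ->
  exists v : 'cV_(s + s), [/\ v != 0, A *m v = l *: v & (const_mx 1 - A) *m v = - l *: v].
Proof.
move=> x_neq0 Hx; exists (T *m col_mx 0 x); split.
- apply: contraNneq x_neq0 => /(congr1 (mulmx (invmx T))).
  by rewrite mulKmx ?band_basis_unit // mulmx0 => /eqP; rewrite col_mx_eq0 => /andP[].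
- rewrite mulmxA band_block_basis -mulmxA mul_block_col !(mul0mx, mulmx0, addr0, add0r).
  by rewrite Hx scalemxAr scale_col_mx scaler0.
- rewrite mulmxA coband_block_basis -mulmxA mul_block_col !(mul0mx, mulmx0, addr0, add0r).
  by rewrite mulNmx Hx scalemxAr scale_col_mx scaler0 scaleNr.
Qed.

End BandSpectrum.

Section AntitriSpectrum.
Variables (R : rcfType) (s : nat).
Hypothesis s_gt0 : (0 < s)%N.
Local Notation H := (antitri_mx R s).
Local Notation K := (const_mx 2 - antitri_mx R s).
Local Notation S := (s%:R : R).

Let S_gt0 : 0 < S. Proof. by rewrite ltr0n. Qed.

Lemma antitri_eigen_bounds hl : char_poly H = \prod_(h <- hl) ('X - h%:P) ->
  (exists2 h, h \in hl & S + 1 <= 2 * h) /\ 2 * \sum_(h <- hl) h ^+ 2 = S * (S + 1).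
Proof.
move=> charH; rewrite (realsym_sum_sqr_eigen (antitri_sym R s) charH) antitri_sum_sqr.
split; last exact: antitri_sum.
have [h h_in h_ge] := realsym_eigen_ge_mean (antitri_sym R s) charH s_gt0.
by exists h => //; rewrite -(ler_pM2l S_gt0) -antitri_sum mulrCA ler_pM2l.
Qed.

Lemma const2_sub_antitri_eigen_bounds ks : char_poly K = \prod_(k <- ks) ('X - k%:P) ->
  (exists2 k, k \in ks & 3 * S - 1 <= 2 * k) /\
  2 * \sum_(k <- ks) k ^+ 2 = 5 * S ^+ 2 - 3 * S.
Proof.
move=> charK; have K_sym : K^T = K by rewrite linearB /= trmx_const antitri_sym.
have H_sum := antitri_sum R s.
rewrite (realsym_sum_sqr_eigen K_sym charK) sum_sqr_const_sub_mx antitri_sum_sqr.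
split; last by nra.
have [k k_in k_ge] := realsym_eigen_ge_mean K_sym charK s_gt0.
exists k => //; rewrite sum_const_sub_mx in k_ge.
by rewrite -(ler_pM2l S_gt0); nra.
Qed.

Lemma antitri_spectral_gap ks hl : (1 < s)%N ->
  char_poly K = \prod_(k <- ks) ('X - k%:P) -> char_poly H = \prod_(h <- hl) ('X - h%:P) ->
  exists k0 y, [/\ k0 \in ks, y \in hl, forall h, h \in hl -> `|h| <= `|y|,
    forall k, k \in rem k0 ks -> `|k| < `|y| & `|y| < `|k0|].
Proof.
move=> s_gt1 charK charH.
have [[k0 k0_in k0_ge] sum_ks] := const2_sub_antitri_eigen_bounds charK.
have [[h0 h0_in h0_ge] sum_hl] := antitri_eigen_bounds charH.
have [y y_in y_max] : exists2 y, y \in hl & forall h, h \in hl -> `|h| <= `|y|.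
  by apply: exists_max_seq; rewrite -size_eq0 (size_char_poly_roots charH) -lt0n.
have S_ge2 : 2 <= S by rewrite ler_nat.
have y_ge : S + 1 <= 2 * `|y|.
  by rewrite (le_trans h0_ge) // ler_pM2l // (le_trans (ler_norm h0)) ?y_max.
have y_le : 2 * `|y| ^+ 2 <= S * (S + 1).
  by rewrite real_normK ?num_real // -sum_hl ler_pM2l ?sqr_le_sum_sqr.
exists k0, y; split => // [k /(sqrD_le_sum_sqr k0_in) | ].
  by rewrite -(real_normK (num_real k)); nra.
by rewrite (@ger0_norm _ k0); nra.
Qed.

Lemma antitri1_spectrum ks hl : s = 1%N ->
  char_poly K = \prod_(k <- ks) ('X - k%:P) -> char_poly H = \prod_(h <- hl) ('X - h%:P) ->
  ks = [:: 1] /\ hl = [:: 1].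
Proof.
move=> s1 charK charH; have S1 : S = 1 by rewrite s1.
have [[k0 k0_in k0_ge] sum_ks] := const2_sub_antitri_eigen_bounds charK.
have [[h0 h0_in h0_ge] sum_hl] := antitri_eigen_bounds charH.
have singleton (l : seq R) x : size l = 1%N -> x \in l -> l = [:: x].
  by case: l => [|a [|]] // _; rewrite inE => /eqP ->.
have k0_1 : k0 = 1 by have := sqr_le_sum_sqr k0_in; nra.
have h0_1 : h0 = 1 by have := sqr_le_sum_sqr h0_in; nra.
split; [rewrite -k0_1 | rewrite -h0_1]; apply: singleton => //.
  by rewrite (size_char_poly_roots charK) s1.
by rewrite (size_char_poly_roots charH) s1.
Qed.

Lemma band_block_second_eigen lam : size lam = (s + s)%N ->
  char_poly (band_block R s) = \prod_(x <- lam) ('X - x%:P) ->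
  sorted (fun x y => `|y| <= `|x|) lam ->
  exists2 hl, char_poly H = \prod_(h <- hl) ('X - h%:P) &
    lam`_1 \in hl /\ forall h, h \in hl -> `|h| <= `|lam`_1|.
Proof.
move=> size_lam charA lam_sorted; rewrite char_band_block in charA.
have [ks [hl [charK charH lam_perm]]] :=
  split_mul_monic (char_poly_monic _) (char_poly_monic _) charA.
exists hl => //; have [s_gt1 | s_le1] := ltnP 1 s.
  have [k0 [y [k0_in y_in y_max k_lt_y y_lt_k0]]] := antitri_spectral_gap s_gt1 charK charH.
  have lam_perm' : perm_eq lam (k0 :: (rem k0 ks ++ hl)).
    by rewrite (permPl lam_perm) -cat_cons perm_cat2r perm_to_rem.
  have [] := abs_sorted_nth1 lam_sorted lam_perm' y_lt_k0.
  - by move=> z; rewrite mem_cat => /orP[/k_lt_y/ltW | /y_max].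
  - by exists y; rewrite // mem_cat y_in orbT.
  rewrite mem_cat => /orP[/k_lt_y lam1_lt lam1_eq | lam1_in ->]; last by split.
  by rewrite lam1_eq ltxx in lam1_lt.
(* For s = 1 there is no gap: both blocks are the 1 x 1 identity. *)
have s1 : s = 1%N by apply/anti_leq; rewrite s_le1.
have [ks1 hl1] := antitri1_spectrum s1 charK charH.
have : lam`_1 \in ks ++ hl by rewrite -(perm_mem lam_perm) mem_nth // size_lam s1.
rewrite ks1 hl1 mem_cat orbb mem_seq1 => /eqP ->.
by split => // h; rewrite mem_seq1 => /eqP ->.
Qed.
End AntitriSpectrum.

(* lam`_1 is lambda_2(A), gam`_1 is gamma_2 (0-based sequence indexing). *)
Theorem theorem9 (R : rcfType) (s : nat) (hs : (1 <= s)%N)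
    (lam : seq R) (hlam : abs_ordered_eigenvalues (bandA R s) lam) :
  exists gam : seq R,
    [/\ abs_ordered_eigenvalues (bandB R s) gam,
        `|lam`_1| = `|gam`_1|
      & exists v : 'cV[R]_(s.*2),
          [/\ v != 0, bandA R s *m v = lam`_1 *: v
            & bandB R s *m v = gam`_1 *: v]].
Proof.
move: lam hlam; rewrite /abs_ordered_eigenvalues /bandB /bandA -addnn band_blockE.
move=> lam [size_lam charA lam_sorted].
have [hl charH [lam1_in lam1_max]] := band_block_second_eigen hs size_lam charA lam_sorted.
have [gam [gam_perm gam_sorted gam1]] := abs_sorted_opp_pair lam1_in lam1_max.
have /eigenvalueP[u Hu u_neq0] : eigenvalue (antitri_mx R s) lam`_1.
  by rewrite eigenvalue_root_char charH root_prod_XsubC.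
have Hx : antitri_mx R s *m u^T = lam`_1 *: u^T.
  by rewrite -[X in X *m _]antitri_sym -trmx_mul Hu linearZ.
have [|v [v_neq0 Av Bv]] := band_block_eigenvector _ Hx; first by rewrite trmx_eq0.
exists gam; split.
- split => //.
    by rewrite (perm_size gam_perm) size_cat size_map (size_char_poly_roots charH).
  by rewrite char_coband_block (char_poly_opp charH) charH (perm_big _ gam_perm) big_cat.
- by rewrite gam1 normrN.
- by exists v; rewrite gam1.
Qed.
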